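(* Let $\Gamma$ be a digraph on a set $\Omega$ and let $\mathbf{a}=(\alpha_0,\alpha_1,\ldots)$ be an infinite walk in $\Gamma$ such that every vertex occurs only finitely many times in $\mathbf{a}$. Then there is a ray $\mathbf{r}$ in $\Gamma$ whose vertex sequence is a subsequence of $\mathbf{a}$ such that, for every infinite subset $\Sigma\subseteq\{\alpha_0,\alpha_1,\ldots\}$, we have both $\mathbf{r}\preccurlyeq\Sigma$ and $\Sigma\preccurlyeq\mathbf{r}$. Analogously, if $\mathbf{a}$ is an infinite anti-walk in which every vertex occurs only finitely many times, then $\mathbf{a}$ contains (as a subsequence) an anti-ray $\mathbf{r}$ with $\mathbf{r}\preccurlyeq\Sigma$ and $\Sigma\preccurlyeq\mathbf{r}$ for every infinite subset $\Sigma$ of the vertices of $\mathbf{a}$.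
   Context: A digraph on a set $\Omega$ is a subset $\Gamma\subseteq\Omega\times\Omega$; elements of $\Omega$ are vertices and elements of $\Gamma$ are edges. A walk is a finite or infinite sequence $(v_0,v_1,\ldots)$ of (not necessarily distinct) vertices with $(v_i,v_{i+1})\in\Gamma$ for all $i$; an anti-walk is such a sequence with $(v_{i+1},v_i)\in\Gamma$ for all $i$. A path is a walk consisting of pairwise distinct vertices (a single vertex is a path of length $0$). A ray is an infinite path; an anti-ray is an infinite anti-walk of pairwise distinct vertices. For infinite subsets $\Sigma',\Sigma\subseteq\Omega$ (rays and anti-rays are identified with their vertex sets), write $\Sigma'\preccurlyeq\Sigma$ if there exist infinitely many pairwise vertex-disjoint paths in $\Gamma$ (paths of length $0$ allowed), each with initial vertex in $\Sigma'$ and final vertex in $\Sigma$. *)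

(* A digraph on Omega is a relation G : Omega -> Omega -> Prop
   (edge set Gamma = {(u,v) | G u v}). Infinite sequences are functions nat -> Omega;
   finite paths are nonempty duplicate-free lists. *)
From Stdlib Require Import List.
Import ListNotations.

Section Digraph.
Context {Omega : Type} (G : Omega -> Omega -> Prop).

Definition inf_walk (a : nat -> Omega) : Prop := forall i, G (a i) (a (S i)).
Definition inf_antiwalk (a : nat -> Omega) : Prop := forall i, G (a (S i)) (a i).

Definition ray (r : nat -> Omega) : Prop :=
  inf_walk r /\ (forall i j, r i = r j -> i = j).
Definition antiray (r : nat -> Omega) : Prop :=
  inf_antiwalk r /\ (forall i j, r i = r j -> i = j).

Fixpoint chain (l : list Omega) : Prop :=
  match l with
  | x :: ((y :: _) as t) => G x y /\ chain t
  | _ => True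
  end.

(* a finite path (length 0 allowed = single vertex) *)
Definition path (p : list Omega) : Prop := p <> [] /\ NoDup p /\ chain p.

Definition path_from_to (p : list Omega) (x y : Omega) : Prop :=
  path p /\ hd_error p = Some x /\ last p x = y.

(* Sigma' ≼ Sigma : infinitely many pairwise vertex-disjoint paths from Sigma' to Sigma *)
Definition prec (S' S : Omega -> Prop) : Prop :=
  exists P : nat -> list Omega,
    (forall n, exists x y, S' x /\ S y /\ path_from_to (P n) x y) /\
    (forall n m, n <> m -> forall v, In v (P n) -> ~ In v (P m)).

End Digraph.

Definition infinite_set {Omega : Type} (S : Omega -> Prop) : Prop :=
  forall l : list Omega, exists x, S x /\ ~ In x l.

Definition finitely_often {Omega : Type} (a : nat -> Omega) : Prop :=
  forall v, exists N, forall i, a i = v -> i < N.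

Definition subseq_of {Omega : Type} (r a : nat -> Omega) : Prop :=
  exists f : nat -> nat, (forall i, f i < f (S i)) /\ (forall i, r i = a (f i)).

Definition vset {Omega : Type} (a : nat -> Omega) : Omega -> Prop :=
  fun v => exists i, a i = v.

(* Along the walk, jump from each visited vertex to its last occurrence and step
   once more; the vertices landed on form a ray r, since consecutive landings are
   joined by a walk edge and no vertex of r occurs again later.  Every tail of the
   walk links r and Σ in both directions: from r_N forward to a later element of Σ,
   and from an element α_i of Σ forward to r_i, which sits at index >= i.  Loop
   erasure turns these walk segments into paths, and as every vertex occurs only
   finitely often, segments taken in far enough apart windows are disjoint.
   The anti-walk case is the walk case in the reversed digraph. *)

From Stdlib Require Import List Arith Lia Classical ClassicalEpsilon.
Import ListNotations.

Lemma last_in_range (P : nat -> Prop) (i j : nat) :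
  i <= j -> P i -> exists k, i <= k <= j /\ P k /\ forall m, k < m <= j -> ~ P m.
Proof.
  intros Hij HPi; induction Hij as [|j Hij IH].
  - exists i; repeat split; auto; lia.
  - destruct (classic (P (S j))) as [HPj|HPj].
    + exists (S j); repeat split; auto; lia.
    + destruct IH as [k [Hk [HPk Hlast]]].
      exists k; split; [lia|split; [exact HPk|]].
      intros m Hm; destruct (Nat.eq_dec m (S j)) as [->|Hne]; [exact HPj|].
      apply Hlast; lia.
Qed.

Lemma increasing_lt (h : nat -> nat) :
  (forall n, h n < h (S n)) -> forall n m, n < m -> h n < h m.
Proof.
  intros Hh n m Hnm; induction Hnm as [|m _ IH]; [apply Hh|].
  specialize (Hh m); lia.
Qed.

Section Digraph.
Context {Omega : Type} (G : Omega -> Omega -> Prop).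

Lemma path_from_to_singleton (x : Omega) : path_from_to G [x] x x.
Proof.
  repeat split; [discriminate|].
  constructor; [intros []|constructor].
Qed.

Lemma path_from_to_cons (x y z : Omega) (p : list Omega) :
  path_from_to G p y z -> G x y -> ~ In x p -> path_from_to G (x :: p) x z.
Proof.
  intros [[Hne [Hnd Hch]] [Hhd Hlast]] Hxy Hx.
  destruct p as [|y' t]; [contradiction|].
  injection Hhd as ->.
  repeat split; [discriminate|constructor; assumption|exact Hxy|exact Hch|].
  change (last (y :: t) x = z).
  destruct (exists_last (l := y :: t) ltac:(discriminate)) as [l [w Hlw]].
  rewrite Hlw, last_last in Hlast |- *; exact Hlast.
Qed.

Lemma chain_snoc (l : list Omega) (x y : Omega) :
  chain G (l ++ [x]) -> G x y -> chain G (l ++ [x; y]).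
Proof.
  induction l as [|z l IH]; intros Hc Hxy; [split; [exact Hxy|exact I]|].
  destruct l as [|w l]; cbn in *; [tauto|].
  destruct Hc as [Hzw Hc]; split; [exact Hzw|exact (IH Hc Hxy)].
Qed.

Lemma chain_rev (l : list Omega) :
  chain (fun x y => G y x) l -> chain G (rev l).
Proof.
  induction l as [|x [|y l] IH]; intros Hc; [exact I|exact I|].
  destruct Hc as [Hyx Hc]; cbn in IH |- *.
  rewrite <- app_assoc; exact (chain_snoc _ _ _ (IH Hc) Hyx).
Qed.

Lemma path_from_to_rev (p : list Omega) (x y : Omega) :
  path_from_to (fun u v => G v u) p x y -> path_from_to G (rev p) y x.
Proof.
  intros [[Hne [Hnd Hch]] [Hhd Hlast]].
  split; [split; [|split]|split].
  - intros Hnil; apply Hne; rewrite <- (rev_involutive p), Hnil; reflexivity.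
  - exact (NoDup_rev Hnd).
  - exact (chain_rev p Hch).
  - destruct (exists_last Hne) as [l [z ->]].
    rewrite last_last in Hlast; rewrite rev_unit, Hlast; reflexivity.
  - destruct p as [|x' t]; [contradiction|injection Hhd as ->].
    apply last_last.
Qed.

Lemma prec_rev (A B : Omega -> Prop) : prec (fun x y => G y x) A B -> prec G B A.
Proof.
  intros [P [Hends Hdisj]].
  exists (fun n => rev (P n)); split.
  - intros n; destruct (Hends n) as [x [y [Hx [Hy Hp]]]].
    exists y, x; split; [exact Hy|split; [exact Hx|exact (path_from_to_rev _ _ _ Hp)]].
  - intros n m Hnm v Hn Hm; rewrite <- in_rev in Hn, Hm.
    exact (Hdisj n m Hnm v Hn Hm).
Qed.

Definition drawn_from (a : nat -> Omega) (lo hi : nat) (p : list Omega) : Prop :=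
  forall v, In v p -> exists i, lo <= i <= hi /\ a i = v.

Lemma drawn_from_widen (a : nat -> Omega) (lo hi lo' hi' : nat) (p : list Omega) :
  lo' <= lo -> hi <= hi' -> drawn_from a lo hi p -> drawn_from a lo' hi' p.
Proof.
  intros Hlo Hhi Hp v Hv; destruct (Hp v Hv) as [i [Hi Hai]].
  exists i; split; [lia|exact Hai].
Qed.

(* Loop erasure: continue from the last occurrence of [a i] up to [j]. *)
Lemma walk_segment_path (a : nat -> Omega) (i j : nat) :
  (forall m, i <= m < j -> G (a m) (a (S m))) -> i <= j ->
  exists p, path_from_to G p (a i) (a j) /\ drawn_from a i j p.
Proof.
  remember (j - i) as n eqn:Hn; revert i Hn.
  induction n as [n IH] using lt_wf_ind; intros i Hn Hedge Hij.
  destruct (last_in_range (fun m => a m = a i) i j Hij eq_refl)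
    as [k [Hk [Hak Hlast]]].
  destruct (Nat.eq_dec k j) as [->|Hkj].
  - exists [a i]; split.
    + rewrite Hak; apply path_from_to_singleton.
    + intros v [<-|[]]; exists i; split; [lia|reflexivity].
  - destruct (IH (j - S k) ltac:(lia) (S k) eq_refl) as [p [Hp Hdrawn]];
      [intros m Hm; apply Hedge; lia|lia|].
    exists (a i :: p); split.
    + apply (path_from_to_cons _ (a (S k))); [exact Hp| |].
      * rewrite <- Hak; apply Hedge; lia.
      * intros Hin; destruct (Hdrawn _ Hin) as [m [Hm Ham]].
        exact (Hlast m ltac:(lia) Ham).
    + intros v [<-|Hv]; [exists i; split; [lia|reflexivity]|].
      destruct (Hdrawn v Hv) as [m [Hm Ham]]; exists m; split; [lia|exact Ham].
Qed.

Lemma last_occurrence (a : nat -> Omega) : finitely_often a ->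
  forall i, exists k, i <= k /\ a k = a i /\ forall m, k < m -> a m <> a i.
Proof.
  intros Hfin i; destruct (Hfin (a i)) as [N HN].
  destruct (last_in_range (fun m => a m = a i) i (i + N) ltac:(lia) eq_refl)
    as [k [Hk [Hak Hlast]]].
  exists k; split; [lia|split; [exact Hak|]].
  intros m Hm Ham; destruct (le_lt_dec m (i + N)).
  - exact (Hlast m ltac:(lia) Ham).
  - specialize (HN m Ham); lia.
Qed.

Lemma occurrences_bounded (a : nat -> Omega) : finitely_often a ->
  forall n, exists c, forall i j, i <= n -> a j = a i -> j <= c.
Proof.
  intros Hfin n; induction n as [|n [c IH]].
  - destruct (Hfin (a 0)) as [N HN]; exists N; intros i j Hi Hj.
    replace i with 0 in Hj by lia; specialize (HN j Hj); lia.
  - destruct (Hfin (a (S n))) as [N HN]; exists (Nat.max c N); intros i j Hi Hj.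
    destruct (Nat.eq_dec i (S n)) as [->|Hne].
    + specialize (HN j Hj); lia.
    + specialize (IH i j ltac:(lia) Hj); lia.
Qed.

Lemma infinite_subset_late (a : nat -> Omega) (Sigma : Omega -> Prop) :
  (forall v, Sigma v -> vset a v) -> infinite_set Sigma ->
  forall N, exists i, N <= i /\ Sigma (a i).
Proof.
  intros Hsub Hinf N; destruct (Hinf (map a (seq 0 N))) as [s [Hs Hnew]].
  destruct (Hsub s Hs) as [i <-]; exists i; split; [|exact Hs].
  destruct (le_lt_dec N i) as [|Hlt]; [assumption|].
  exfalso; apply Hnew, in_map, in_seq; lia.
Qed.

(* The n-th path is taken from the window starting at [start n]; each window
   starts beyond every later occurrence of the vertices used before it. *)
Lemma prec_of_late_paths (a : nat -> Omega) (A B : Omega -> Prop) :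
  finitely_often a ->
  (forall N, exists p hi x y,
     A x /\ B y /\ path_from_to G p x y /\ drawn_from a N hi p) ->
  prec G A B.
Proof.
  intros Hfin Hlate.
  destruct (choice _ (occurrences_bounded a Hfin)) as [c Hc].
  destruct (choice _ Hlate) as [P HP].
  destruct (choice _ HP) as [hi Hhi].
  set (start n := Nat.iter n (fun N => S (N + c (hi N))) 0).
  assert (Hstart : forall n m, n < m -> c (hi (start n)) < start m).
  { assert (Hstep : forall n, start (S n) = S (start n + c (hi (start n))))
      by reflexivity.
    intros n m Hnm; induction Hnm as [|m _ IH]; rewrite Hstep; lia. }
  assert (Hdisj : forall n m, n < m ->
            forall v, In v (P (start n)) -> ~ In v (P (start m))).
  { intros n m Hnm v Hn Hm.
    destruct (Hhi (start n)) as [_ [_ [_ [_ [_ Hdn]]]]].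
    destruct (Hhi (start m)) as [_ [_ [_ [_ [_ Hdm]]]]].
    destruct (Hdn v Hn) as [i [Hi Hai]], (Hdm v Hm) as [j [Hj Haj]].
    assert (j <= c (hi (start n))) by (apply (Hc _ i); [lia|congruence]).
    specialize (Hstart n m Hnm); lia. }
  exists (fun n => P (start n)); split.
  - intros n; destruct (Hhi (start n)) as [x [y [Hx [Hy [Hp _]]]]].
    exists x, y; auto.
  - intros n m Hnm; apply Nat.lt_gt_cases in Hnm as [Hlt|Hlt].
    + exact (Hdisj n m Hlt).
    + intros v Hn Hm; exact (Hdisj m n Hlt v Hm Hn).
Qed.

Lemma last_visit_indices (a : nat -> Omega) : finitely_often a ->
  exists f : nat -> nat,
    (forall k, k <= f k) /\ (forall k, f k < f (S k)) /\
    (forall k, a (f (S k)) = a (S (f k))) /\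
    (forall k l, a (f k) = a (f l) -> k = l).
Proof.
  intros Hfin; destruct (choice _ (last_occurrence a Hfin)) as [L HL].
  set (f k := Nat.iter k (fun x => L (S x)) (L 0)).
  assert (Hstep : forall k, f (S k) = L (S (f k))) by reflexivity.
  assert (Hf_last : forall k m, f k < m -> a m <> a (f k)).
  { intros k m; assert (HfL : exists x, f k = L x) 
      by (destruct k; [exists 0|exists (S (f k))]; reflexivity).
    destruct HfL as [x Hx], (HL x) as [_ [HLx Hm]]; rewrite Hx, HLx; apply Hm. }
  assert (Hinc : forall k, f k < f (S k)).
  { intros k; rewrite Hstep; destruct (HL (S (f k))); lia. }
  exists f; split; [|split; [exact Hinc|split]].
  - intros k; induction k as [|k IH]; [lia|specialize (Hinc k); lia].
  - intros k; rewrite Hstep; apply HL.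
  - intros k l Hkl; destruct (Nat.lt_total k l) as [Hlt|[Heq|Hlt]]; [|exact Heq|].
    + exfalso; exact (Hf_last k _ (increasing_lt f Hinc k l Hlt) (eq_sym Hkl)).
    + exfalso; exact (Hf_last l _ (increasing_lt f Hinc l k Hlt) Hkl).
Qed.

Theorem ray_in_walk (a : nat -> Omega) :
  inf_walk G a -> finitely_often a ->
  exists r : nat -> Omega,
    ray G r /\ subseq_of r a /\
    (forall Sigma : Omega -> Prop,
       (forall v, Sigma v -> vset a v) -> infinite_set Sigma ->
       prec G (vset r) Sigma /\ prec G Sigma (vset r)).
Proof.
  intros Hw Hfin.
  destruct (last_visit_indices a Hfin) as [f [Hge [Hinc [Hnext Hinj]]]].
  assert (Hseg : forall i j, i <= j ->
            exists p, path_from_to G p (a i) (a j) /\ drawn_from a i j p)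
    by (intros i j; apply walk_segment_path; intros m _; apply Hw).
  exists (fun k => a (f k)); split; [split|split].
  - intros k; cbn; rewrite Hnext; apply Hw.
  - exact Hinj.
  - exists f; split; [exact Hinc|reflexivity].
  - intros Sigma Hsub Hinf; split; apply (prec_of_late_paths a); auto; intros N.
    + destruct (infinite_subset_late a Sigma Hsub Hinf (f N)) as [i [Hi HSi]].
      destruct (Hseg (f N) i Hi) as [p [Hp Hdrawn]].
      exists p, i, (a (f N)), (a i).
      split; [now exists N|split; [exact HSi|split; [exact Hp|]]].
      apply (drawn_from_widen _ (f N) i); auto.
    + destruct (infinite_subset_late a Sigma Hsub Hinf N) as [i [Hi HSi]].
      destruct (Hseg i (f i) (Hge i)) as [p [Hp Hdrawn]].
      exists p, (f i), (a i), (a (f i)).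
      split; [exact HSi|split; [now exists i|split; [exact Hp|]]].
      apply (drawn_from_widen _ i (f i)); auto.
Qed.

End Digraph.

Theorem mainTheorem1 (Omega : Type) (G : Omega -> Omega -> Prop) :
  (forall a : nat -> Omega,
     inf_walk G a -> finitely_often a ->
     exists r : nat -> Omega,
       ray G r /\ subseq_of r a /\
       (forall S : Omega -> Prop,
          (forall v, S v -> vset a v) -> infinite_set S ->
          prec G (vset r) S /\ prec G S (vset r))) /\
  (forall a : nat -> Omega,
     inf_antiwalk G a -> finitely_often a ->
     exists r : nat -> Omega,
       antiray G r /\ subseq_of r a /\
       (forall S : Omega -> Prop,
          (forall v, S v -> vset a v) -> infinite_set S ->
          prec G (vset r) S /\ prec G S (vset r))).
Proof.
  split; [apply ray_in_walk|].
  intros a Hw Hfin.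
  destruct (ray_in_walk (fun x y => G y x) a Hw Hfin) as [r [Hr [Hsub Hprec]]].
  exists r; split; [exact Hr|split; [exact Hsub|]].
  intros Sigma HSigma Hinf; destruct (Hprec Sigma HSigma Hinf) as [Hfrom Hto].
  split; apply prec_rev; assumption.
Qed.
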